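(* For every odd integer $\ell\ge 17$ there exists a palindrome of length $\ell$ over a ternary alphabet whose critical exponent is exactly $\tfrac{7}{4}$.
   Context: A word $x=x[1..n]$ has period $q$ if $x[i]=x[i+q]$ for $1\le i\le n-q$. For integers $p>q\ge1$, $x$ is a $(p/q)$-power if it has length $p$ and period $q$. The exponent $\exp(w)$ of a finite nonempty word $w$ is the largest rational $p/q$ such that $w$ is a $(p/q)$-power. The critical exponent of $w$ is the maximum of $\exp(w')$ over all nonempty factors $w'$ of $w$. A palindrome is a word equal to its reversal. *)

From mathcomp Require Import all_boot all_order all_algebra.
Set Implicit Arguments. Unset Strict Implicit. Unset Printing Implicit Defensive.
Import Order.TTheory GRing.Theory Num.Theory.

(* Positions are 0-based: x[1..n] of the paper is nth ord0 x 0 .. nth ord0 x (n-1). *)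
Definition word := seq 'I_3.

Definition has_period (x : word) (q : nat) : bool :=
  all (fun i => (i + q < size x) ==> (nth ord0 x i == nth ord0 x (i + q)))
      (iota 0 (size x)).

Definition exponent (x : word) : rat :=
  foldr Num.max (0 : rat)
    [seq ((size x)%:R / q%:R : rat)%R | q <- iota 1 (size x) & has_period x q].

Definition factor (x : word) (i j : nat) : word := take j (drop i x).

Definition crit_exp (x : word) : rat :=
  foldr Num.max (0 : rat)
    [seq exponent (factor x i j) | i <- iota 0 (size x), j <- iota 1 (size x - i)].

From mathcomp Require Import all_boot all_order all_algebra zify.
Set Implicit Arguments. Unset Strict Implicit. Unset Printing Implicit Defensive.
Import Order.TTheory GRing.Theory Num.Theory.

(* The witness is the central factor of length l of h^(l+1)(0), where h is the
   19-uniform morphism on {0,1,2} with h(a) = h(0) + a (mod 3) and h(0) a palindrome.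
   The morphism h preserves (7/4)+-freeness: repetitions of period < 50 are excluded
   by a finite check on images of short (7/4)+-free words, while a longer repetition
   contains a whole image block, and since h is synchronizing its period is a multiple
   of 19; as each letter is determined by any single position of its image, it then
   pulls back to a repetition of at least the same exponent in the preimage.
   So h^n(0) is a (7/4)+-free palindrome of odd length 19^n, its central factors are
   palindromes, and every image h(a) contains the 7/4-power h(a)[1..7] of period 4,
   which a centred factor of length >= 17 covers. *)

Section UniformMorphism.
Variables (A B : Type) (k : nat) (f : A -> seq B).
Hypothesis size_f : forall a, size (f a) = k.

Definition morph (w : seq A) : seq B := flatten (map f w).

Lemma morph_cons a w : morph (a :: w) = f a ++ morph w.
Proof. by []. Qed.

Lemma size_morph w : size (morph w) = k * size w.
Proof. by elim: w => [|a w IH]; rewrite ?muln0 // morph_cons size_cat size_f IH mulnS. Qed.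

Lemma nth_morph a0 b0 w j r : j < size w -> r < k ->
  nth b0 (morph w) (k * j + r) = nth b0 (f (nth a0 w j)) r.
Proof.
elim: w j => [|a w IH] [|j] // hj hr; rewrite morph_cons nth_cat size_f.
  by rewrite muln0 hr.
by rewrite ifF ?mulnS -?addnA ?addKn ?IH //; lia.
Qed.

Lemma morph_drop j w : morph (drop j w) = drop (k * j) (morph w).
Proof.
elim: w j => [|a w IH] [|j] //=; first by rewrite muln0 drop0.
by rewrite morph_cons drop_cat size_f ifF ?IH ?mulnS ?addKn //; lia.
Qed.

Lemma morph_take j w : morph (take j w) = take (k * j) (morph w).
Proof.
elim: w j => [|a w IH] [|j] //=; first by rewrite muln0 take0.
by rewrite !morph_cons take_cat size_f ifF ?IH ?mulnS ?addKn //; lia.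
Qed.

Lemma morph_rcons w a : morph (rcons w a) = morph w ++ f a.
Proof. by rewrite /morph map_rcons flatten_rcons. Qed.

Lemma morph_rev w : (forall a, rev (f a) = f a) -> morph (rev w) = rev (morph w).
Proof.
move=> f_pal; elim: w => [|a w IH] //.
by rewrite rev_cons morph_rcons IH morph_cons rev_cat f_pal.
Qed.

End UniformMorphism.

Lemma size_factor (w : word) i n : i + n <= size w -> size (factor w i n) = n.
Proof. by move=> fits; rewrite size_take_min size_drop; lia. Qed.

Lemma nth_factor (w : word) i n m : m < n -> nth ord0 (factor w i n) m = nth ord0 w (i + m).
Proof. by move=> hm; rewrite nth_take // nth_drop. Qed.

Lemma factor_factor (w : word) s n i m : i + m <= n ->
  factor (factor w s n) i m = factor w (s + i) m.
Proof.
by move=> fits; rewrite /factor take_drop take_takel -?take_drop ?drop_drop 1?addnC //; lia.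
Qed.

Lemma factor_seq (w : word) i n : i + n <= size w ->
  factor w i n = [seq nth ord0 w (i + m) | m <- iota 0 n].
Proof.
move=> fits; apply: (@eq_from_nth _ ord0); first by rewrite size_factor // size_map size_iota.
move=> m; rewrite size_factor // => hm.
by rewrite nth_factor // (nth_map 0) ?size_iota // nth_iota.
Qed.

Lemma rev_factor (w : word) s n : s + n <= size w ->
  rev (factor w s n) = factor (rev w) (size w - (s + n)) n.
Proof.
move=> fits; rewrite /factor rev_take rev_drop size_drop.
have -> : size w - s = n + (size w - (s + n)) by lia.
by rewrite addKn [RHS]take_drop.
Qed.

Definition period_at (w : word) i L p : Prop :=
  i + L <= size w /\ forall m, m + p < L -> nth ord0 w (i + m) = nth ord0 w (i + m + p).

Definition plus_free a b (w : word) : Prop :=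
  forall i L p, 0 < p -> period_at w i L p -> b * L <= a * p.

Lemma period_at_shorten w i L L' p : L' <= L -> period_at w i L p -> period_at w i L' p.
Proof. by move=> le_L [fits per]; split=> [|m hm]; [lia | apply: per; lia]. Qed.

Lemma period_at_factor w j n i L p :
  i + L <= n -> period_at w (j + i) L p -> period_at (factor w j n) i L p.
Proof.
move=> fits_n [fits per]; split=> [|m hm]; first by rewrite size_take_min size_drop; lia.
by rewrite !nth_factor ?addnA ?per //; lia.
Qed.

Lemma factor_period_at w j n i L p :
  0 < L -> period_at (factor w j n) i L p -> period_at w (j + i) L p.
Proof.
move=> L_gt0 [+ per]; rewrite size_take_min size_drop => fits.
split=> [|m hm]; first lia.
by move: (per m hm); rewrite !nth_factor ?addnA //; lia.
Qed.

Lemma plus_free_factor a b w j n : plus_free a b w -> plus_free a b (factor w j n).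
Proof.
move=> free i [|L] p p_gt0 per; first by rewrite muln0.
exact: free p_gt0 (factor_period_at _ per).
Qed.

Lemma factor_shift w i L p j m : i <= j -> j + m + p <= i + L -> period_at w i L p ->
  factor w j m = factor w (j + p) m.
Proof.
move=> le_ij fits [fits_w per]; apply: (@eq_from_nth _ ord0).
  by rewrite !size_factor //; lia.
move=> x; rewrite size_factor => [hx|]; last lia.
rewrite !nth_factor // addnAC.
have -> : j + x = i + (j + x - i) by lia.
by apply: per; lia.
Qed.

Section Exponents.
Local Open Scope ring_scope.

Lemma exponent_le a b y : (0 < b)%N -> plus_free a b y -> exponent y <= a%:R / b%:R :> rat.
Proof.
move=> b_gt0 free; rewrite /exponent foldrE big_map big_filter big_seq_cond.
apply: bigmax_le => [|q /andP [q_gt0 /allP per]]; first by rewrite divr_ge0.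
have := free 0%N (size y) q; rewrite mem_iota in q_gt0.
rewrite ler_pdivlMr ?ltr0n // mulrAC ler_pdivrMr ?ltr0n //; last lia.
rewrite -!natrM ler_nat mulnC [(a * q)%N]mulnC; apply; first lia.
split=> // m hm; apply/eqP; move: (per m); rewrite mem_iota hm !implyTb; apply; lia.
Qed.

Lemma crit_exp_le a b w : (0 < b)%N -> plus_free a b w -> crit_exp w <= a%:R / b%:R :> rat.
Proof.
move=> b_gt0 free; rewrite /crit_exp foldrE big_seq.
apply: bigmax_le => [|e /allpairsPdep [i [n [_ _ ->]]]]; first by rewrite divr_ge0.
exact/exponent_le/plus_free_factor.
Qed.

Lemma exponent_factor_le_crit_exp w i n : (i < size w)%N -> (0 < n <= size w - i)%N ->
  exponent (factor w i n) <= crit_exp w.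
Proof.
move=> hi hn; rewrite /crit_exp foldrE; apply: le_bigmax_seq => //.
by apply/allpairsPdep; exists i, n; rewrite !mem_iota; split=> //; lia.
Qed.

End Exponents.

Definition letter (n : nat) : 'I_3 := Ordinal (ltn_pmod n (isT : 0 < 3)).
Definition letters : seq 'I_3 := map letter (iota 0 3).

Lemma mem_letters a : a \in letters.
Proof. by case: a => -[|[|[|//]]]. Qed.

Lemma all_lettersP (P : pred 'I_3) : reflect (forall a, P a) (all P letters).
Proof. by apply: (iffP allP) => [all_P a | all_P a _]; [apply: all_P; apply: mem_letters|]. Qed.

Definition h0 : word :=
  map letter [:: 0; 1; 2; 0; 2; 1; 2; 0; 1; 2; 1; 0; 2; 1; 2; 0; 2; 1; 0].
Definition h (a : 'I_3) : word := [seq (b + a)%R | b <- h0].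
Definition hw : word -> word := morph h.

Lemma size_h a : size (h a) = 19.
Proof. by rewrite size_map. Qed.

Lemma size_hw w : size (hw w) = 19 * size w.
Proof. exact: size_morph size_h w. Qed.

Lemma h_injective_at k a b : k < 19 -> nth ord0 (h a) k = nth ord0 (h b) k -> a = b.
Proof. by move=> hk; rewrite !(nth_map ord0) //; apply: addrI. Qed.

Lemma h_palindrome a : rev (h a) = h a.
Proof. by rewrite /h -map_rev. Qed.

Lemma hw_rev w : hw (rev w) = rev (hw w).
Proof. exact/morph_rev/h_palindrome. Qed.

Lemma exponent_h a : exponent (factor (h a) 1 7) = (7%:R / 4%:R)%R.
Proof. by apply/eqP; move: a; apply/all_lettersP; vm_compute. Qed.

Lemma h_synchronizing a b c r : 0 < r < 19 -> factor (h b ++ h c) r 19 != h a.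
Proof.
suff /all_lettersP /(_ a) /all_lettersP /(_ b) /all_lettersP /(_ c) /allP check :
  all (fun a => all (fun b => all (fun c => all (fun r =>
    factor (h b ++ h c) r 19 != h a) (iota 1 18)) letters) letters) letters.
  by move=> hr; apply: check; rewrite mem_iota; lia.
by vm_compute.
Qed.

Definition periodicb (w : word) i L p : bool :=
  take (L - p) (drop i w) == take (L - p) (drop (i + p) w).

Lemma periodicbP w i L p : i + L <= size w -> reflect (period_at w i L p) (periodicb w i L p).
Proof.
move=> fits; apply: (iffP eqP) => [eq_wins | [_ per]].
  split=> // m hm; have := congr1 (nth ord0 ^~ m) eq_wins.
  by rewrite !nth_take ?nth_drop 1?addnAC //; lia.
apply: (@eq_from_nth _ ord0) => [|m]; first by rewrite !size_take_min !size_drop; lia.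
rewrite size_take_min size_drop => hm.
by rewrite !nth_take ?nth_drop 1?addnAC ?per //; lia.
Qed.

Definition plus_freeb a b (v : word) : bool :=
  all (fun i => all (fun L => all (fun p =>
      (i + L <= size v) ==> (a * p < b * L) ==> ~~ periodicb v i L p)
    (iota 1 (size v))) (iota 0 (size v).+1)) (iota 0 (size v)).

Lemma plus_free_plus_freeb a b v : plus_free a b v -> plus_freeb a b v.
Proof.
move=> free; apply/allP => i _; apply/allP => L _; apply/allP => p; rewrite mem_iota => hp.
apply/implyP => fits; apply/implyP => large; apply/(periodicbP p fits) => per.
by have := free i L p ltac:(lia) per; lia.
Qed.

Fixpoint words n : seq word :=
  if n is n'.+1 then [seq a :: v | a <- letters, v <- words n'] else [:: [::]].

Lemma words_complete v : v \in words (size v).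
Proof.
elim: v => [|a v IH] //.
exact: (allpairs_f (fun a v => a :: v) (mem_letters a) IH).
Qed.

(* [((7 * p) %/ 4).+1] is the shortest length of a factor of period [p] and exponent
   > 7/4; for [p < 50] it is at most 86, so such a factor starting in the first block
   of [hw w] lies in the image of 7 consecutive letters of [w]. *)
Lemma hw_short_window_free v i p : size v <= 7 -> plus_free 7 4 v -> i < 19 -> 0 < p < 50 ->
  ~ period_at (hw v) i ((7 * p) %/ 4).+1 p.
Proof.
suff /allP /(_ (size v)) check : all (fun n => all (fun v =>
    let u := hw v in all (fun i => all (fun p => (i + ((7 * p) %/ 4).+1 <= size u) ==>
      ~~ periodicb u i ((7 * p) %/ 4).+1 p) (iota 1 49)) (iota 0 19))
    [seq v <- words n | plus_freeb 7 4 v]) (iota 0 8).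
  move=> sv /plus_free_plus_freeb free hi hp [fits per].
  move: check; rewrite mem_iota => /(_ ltac:(lia)) /allP /(_ v).
  rewrite mem_filter free words_complete => /(_ isT) /allP /(_ i).
  rewrite mem_iota => /(_ ltac:(lia)) /allP /(_ p).
  rewrite mem_iota fits => /(_ ltac:(lia)) /(periodicbP p fits); exact.
by vm_compute.
Qed.

Lemma hw_factor w j n : hw (factor w j n) = factor (hw w) (19 * j) (19 * n).
Proof. by rewrite /hw /factor (morph_take size_h) (morph_drop size_h). Qed.

Lemma hw_block w t : t < size w -> factor (hw w) (19 * t) 19 = h (nth ord0 w t).
Proof.
move=> ht; rewrite -[19]muln1 -hw_factor factor_seq; last lia.
by rewrite /= addn0 /hw morph_cons cats0.
Qed.

Lemma hw_short_period w i L p : plus_free 7 4 w -> 0 < p < 50 ->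
  period_at (hw w) i L p -> 4 * L <= 7 * p.
Proof.
move=> free hp per; rewrite leqNgt; apply/negP => long.
have i_mod : i %% 19 < 19 by rewrite ltn_pmod.
apply: (@hw_short_window_free (factor w (i %/ 19) 7) (i %% 19) p) => //.
- by rewrite size_take_min; lia.
- exact: plus_free_factor.
rewrite hw_factor; apply: period_at_factor; first lia.
by rewrite mulnC -divn_eq; apply: period_at_shorten per; lia.
Qed.

Lemma hw_period_sync w i L p : p + 38 <= L -> period_at (hw w) i L p -> 19 %| p.
Proof.
move=> long per; have [fits _] := per; rewrite size_hw in fits.
set t := (i + 18) %/ 19; set q := (19 * t + p) %/ 19; set r := (19 * t + p) %% 19.
have t_win : i <= 19 * t <= i + 18 by rewrite /t; lia.
have tq : 19 * t + p = 19 * q + r by rewrite /q /r; lia.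
rewrite -(dvdn_addr p (dvdn_mulr t (dvdnn 19))) /dvdn -/r eqn0Ngt.
apply/negP => r_gt0; have r_lt : r < 19 by rewrite ltn_pmod.
(* Block [t] lies in the window, so its copy at [19 * t + p] is [h (w_t)] read at
   offset [r] of [h (w_q) ++ h (w_(q+1))], which synchronization forbids. *)
have pair : h (nth ord0 w q) ++ h (nth ord0 w q.+1) = factor (hw w) (19 * q) (19 * 2).
  by rewrite -hw_factor factor_seq /= ?addn0 ?addn1 /hw ?morph_cons ?cats0 //; lia.
have /eqP := h_synchronizing (nth ord0 w t) (nth ord0 w q) (nth ord0 w q.+1)
  (ltac:(lia) : 0 < r < 19); apply.
rewrite pair factor_factor -?tq -?(factor_shift _ _ per) ?hw_block //; lia.
Qed.

Lemma hw_period_desubst w i L p : 19 * p < L -> period_at (hw w) i L (19 * p) ->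
  exists2 L', L <= 19 * L' & period_at w (i %/ 19) L' p.
Proof.
move=> long [fits per]; rewrite size_hw in fits.
exists ((i + L).-1 %/ 19 - i %/ 19).+1; first lia.
split=> [|m hm]; first lia.
have [x [x_ge x_win] x_blk] : exists2 x, i <= x /\ x + 19 * p < i + L & x %/ 19 = i %/ 19 + m.
  by exists (maxn i (19 * (i %/ 19 + m))); lia.
have x_mod : x %% 19 < 19 by rewrite ltn_pmod.
have := per (x - i); rewrite subnKC // => /(_ ltac:(lia)).
rewrite {1}(divn_eq x 19) (_ : x + 19 * p = 19 * (i %/ 19 + m + p) + x %% 19); last lia.
rewrite mulnC x_blk /hw !(nth_morph size_h ord0) //; try lia.
exact: h_injective_at.
Qed.

Lemma hw_plus_free w : plus_free 7 4 w -> plus_free 7 4 (hw w).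
Proof.
move=> free i L p p_gt0 per.
have [p_small | p_large] := ltnP p 50; first by apply: hw_short_period free _ per; lia.
rewrite leqNgt; apply/negP => long.
have /dvdnP [q def_p] := hw_period_sync (ltac:(lia) : p + 38 <= L) per.
rewrite def_p mulnC in per long.
have [L' le_L per'] := hw_period_desubst (ltac:(lia) : 19 * q < L) per.
by have := free _ _ _ (ltac:(lia) : 0 < q) per'; lia.
Qed.

Definition hpow n : word := iter n hw [:: ord0].

Lemma size_hpow n : size (hpow n) = 19 ^ n.
Proof. by elim: n => [|n IH] //; rewrite /hpow iterS size_hw -/(hpow n) IH expnS. Qed.

Lemma hpow_palindrome n : rev (hpow n) = hpow n.
Proof. by elim: n => [|n IH] //; rewrite /hpow iterS -/(hpow n) -hw_rev IH. Qed.

Lemma hpow_plus_free n : plus_free 7 4 (hpow n).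
Proof.
elim: n => [|n IH]; last exact: hw_plus_free.
by move=> i L p p_gt0 [fits _]; rewrite /= in fits; lia.
Qed.

Theorem mainTheorem5 (l : nat) :
  odd l -> 17 <= l ->
  exists w : word, size w = l /\ w = rev w /\ crit_exp w = (7%:R / 4%:R : rat)%R.
Proof.
move=> odd_l l_ge17.
(* The factor of length [l] at [s] is centred on position [19 * c + 9], the middle of
   [hpow l.+1]; since [l >= 17] it covers positions 1..7 of the block
   [h (nth ord0 (hpow l) c)]. *)
set M := 19 ^ l; set c := M %/ 2; set s := 19 * c + 9 - l %/ 2.
have M_odd : M %% 2 = 1 by rewrite modn2 oddX orbT.
have l_odd : l %% 2 = 1 by rewrite modn2 odd_l.
have l_lt : l < M by rewrite ltn_expl.
have hpowS : hpow l.+1 = hw (hpow l) by [].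
have size_w : size (hpow l.+1) = 19 * M by rewrite size_hpow expnS.
have fits : s + l <= size (hpow l.+1) by rewrite size_w /s /c; lia.
exists (factor (hpow l.+1) s l); split; first exact: size_factor.
split.
  by rewrite rev_factor // hpow_palindrome size_w; congr factor; rewrite /s /c; lia.
have centre : factor (h (nth ord0 (hpow l) c)) 1 7 = factor (factor (hpow l.+1) s l) (l %/ 2 - 8) 7.
  rewrite -hw_block ?size_hpow -/M; last by rewrite /c; lia.
  by rewrite !factor_factor -?hpowS; [congr factor; rewrite /s; lia | lia | lia].
have free : plus_free 7 4 (factor (hpow l.+1) s l) := plus_free_factor (@hpow_plus_free l.+1).
apply/eqP; rewrite eq_le crit_exp_le //=.
rewrite -(exponent_h (nth ord0 (hpow l) c)) centre exponent_factor_le_crit_exp //;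
  rewrite size_factor //; lia.
Qed.
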